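(* Let $(\mu_n)$ be an SI-martingale on $\mathbb{R}^d$ which is either of $(\mathcal{F},\tau,\zeta)$-cutout type or of $(\mathcal{F},\tau,\zeta)$-cell type. Let $(\mathcal{M},\nu)$ be a metric measure space, let $\{\Pi_t:\mathcal{M}\to\mathbb{R}^d\}_{t\in\Gamma}$ be a family of Borel maps parametrized by a metric space $(\Gamma,d)$, and set $\eta_t=\Pi_t\nu$ (push-forward). Suppose there are constants $0<\gamma_0,C<\infty$ such that $$\nu\big(\Pi_t^{-1}(\Lambda)\,\Delta\,\Pi_u^{-1}(\Lambda)\big)\le C\, d(t,u)^{\gamma_0}\quad\text{for all }\Lambda\in\mathcal{F},\ t,u\in\Gamma .$$ Then $$\sup_{t\neq u\in\Gamma,\ n\ge N_0}\frac{\left|\int\mu_n\,d\eta_t-\int\mu_n\,d\eta_u\right|}{2^{(\tau+\zeta)n}\,d(t,u)^{\gamma_0}}\le C'<\infty,$$ where $C'$ is a deterministic constant and $N_0$ is the random variable appearing in the definition of cutout type (respectively cell type).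
   Context: An SI-martingale on $\mathbb{R}^d$ is a sequence $(\mu_n)_{n\ge0}$ of random functions $\mu_n:\mathbb{R}^d\to[0,\infty)$ (identified with the measures $\mu_n(x)\,dx$) such that: (SI1) $\mu_0$ is a deterministic bounded function with bounded support; (SI2) there is an increasing filtration $(\mathcal{B}_n)$ with $\mu_n$ $\mathcal{B}_n$-measurable and $\mathbb{E}(\mu_{n+1}(x)\mid\mathcal{B}_n)=\mu_n(x)$ for all $x\in\mathbb{R}^d$, $n\in\mathbb{N}$; (SI3) there is $C<\infty$ with $\mu_{n+1}(x)\le C\mu_n(x)$ for all $x,n$; (SI4) there is $C<\infty$ such that for any $(C2^{-n})$-separated family $\mathcal{Q}$ of half-open dyadic cubes of side length $2^{-(n+1)}$, the restrictions $\{\mu_{n+1}|_Q\}_{Q\in\mathcal{Q}}$ are independent conditionally on $\mathcal{B}_n$. Let $\mathcal{F}$ be a family of Borel subsets of a fixed ball $B(0,R)\subset\mathbb{R}^d$, and $\tau,\zeta>0$. $(\mu_n)$ is of $(\mathcal{F},\tau,\zeta)$-cutout type if there are $C>0$ and a set $\Omega\in\mathcal{F}$ such that $\mu_n=2^{\tau n}\mathbf{1}_{A_n}$ with $A_n=\Omega\setminus\bigcup_{j=1}^{M_n}\Lambda^{(n)}_j$ for a random finite subfamily $\{\Lambda^{(n)}_j\}_{j=1}^{M_n}$ of $\mathcal{F}$, and there is an a.s. finite random variable $N_0$ with $M_n\le C2^{\zeta n}$ for all $n\ge N_0$. $(\mu_n)$ is of $(\mathcal{F},\tau,\zeta)$-cell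 type if there is $C>0$ such that $\mu_n=\sum_{j=1}^{M_n}c^{(n)}_j\mathbf{1}[F^{(n)}_j]$, where $\{F^{(n)}_j\}_{j=1}^{M_n}$ is a random subfamily of $\mathcal{F}$, the random variables satisfy $0\le c^{(n)}_j\le C2^{\tau n}$ for all $j,n$ a.s., and a.s. there is $N_0$ with $M_n\le C2^{\zeta n}$ for all $n\ge N_0$. $A\Delta B$ denotes symmetric difference. *)

From HB Require Import structures.
From mathcomp Require Import all_boot all_order all_algebra.
From mathcomp Require Import all_classical all_reals all_analysis.
Set Implicit Arguments. Unset Strict Implicit. Unset Printing Implicit Defensive.
Import Order.TTheory GRing.Theory Num.Theory.
Import numFieldNormedType.Exports.
Local Open Scope classical_set_scope.
Local Open Scope ring_scope.

(* R^d with its Borel sigma-algebra (generated by the open sets of the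
   product (max-norm) topology on row vectors). *)
Definition Rd (R : realType) (d : nat) :=
  g_sigma_algebraType (@open 'rV[R]_d).

Definition two_pow (R : realType) (a : R) : R := (2 : R) `^ a.

Definition dyadic_cube (R : realType) (d n : nat) (k : 'rV[int]_d) : set 'rV[R]_d :=
  [set x | forall i : 'I_d,
     (k ord0 i)%:~R / 2 ^+ n.+1 <= x ord0 i /\ x ord0 i < (k ord0 i + 1)%:~R / 2 ^+ n.+1].

Definition separated_cubes (R : realType) (d n : nat) (r : R) (K : set 'rV[int]_d) :=
  forall k k', K k -> K k' -> k != k' ->
    forall x y, @dyadic_cube R d n k x -> @dyadic_cube R d n k' y -> r <= `|x - y|.

(* Conditional independence of finitely many sigma-algebras Gs given the
   sigma-algebra B: the product of (versions of) the conditional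
   probabilities P(E_i | B) is a version of P(/\_i E_i | B). *)
Definition cond_prob_version (d : measure_display) (O : measurableType d)
  (R : realType) (P : probability O R) (B : set (set O)) (E : set O) (g : O -> R) :=
  (forall Y : set R, measurable Y -> B (g @^-1` Y)) /\
  forall A, B A -> (\int[P]_(w in A) (g w)%:E = P (A `&` E))%E.

Definition cond_indep (d : measure_display) (O : measurableType d)
  (R : realType) (P : probability O R) (B : set (set O)) (k : nat)
  (Gs : 'I_k -> set (set O)) :=
  forall (E : 'I_k -> set O) (g : 'I_k -> O -> R),
    (forall i, Gs i (E i)) ->
    (forall i, cond_prob_version P B (E i) (g i)) ->
    cond_prob_version P B (\bigcap_(i in [set: 'I_k]) E i)
                          (fun w => \prod_(i < k) g i w).

Definition restr_sigma (d : measure_display) (O : measurableType d) (R : realType)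
  (dd : nat) (f : O -> 'rV[R]_dd -> R) (Q : set 'rV[R]_dd) : set (set O) :=
  <<s [set f' | exists x Y, Q x /\ measurable Y /\ f' = (fun w => f w x) @^-1` Y] >>.

Definition SI_martingale (dO : measure_display) (O : measurableType dO)
  (R : realType) (P : probability O R) (d : nat)
  (mu : nat -> O -> 'rV[R]_d -> R) :=
  (forall n w x, 0 <= mu n w x) /\
  (exists mu0 : 'rV[R]_d -> R,
      (forall w, mu 0%N w = mu0) /\
      (exists M : R, forall x, mu0 x <= M) /\
      (exists r : R, forall x, mu0 x != 0 -> `|x| <= r)) /\
  (exists B : nat -> set (set O),
      (forall n, sigma_algebra setT (B n)) /\
      (forall n, B n `<=` measurable) /\
      (forall n, B n `<=` B n.+1) /\
      (forall n x (Y : set R), measurable Y -> B n ((fun w => mu n w x) @^-1` Y)) /\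
      (forall n x A, B n A ->
         (\int[P]_(w in A) (mu n.+1 w x)%:E = \int[P]_(w in A) (mu n w x)%:E)%E) /\
      (exists C : R, forall n w x, mu n.+1 w x <= C * mu n w x) /\
      (exists C : R, forall n (K : set 'rV[int]_d),
         @separated_cubes R d n (C / 2 ^+ n) K ->
         forall (k : nat) (ks : 'I_k -> 'rV[int]_d),
           injective ks -> (forall i, K (ks i)) ->
           cond_indep P (B n)
             (fun i => restr_sigma (mu n.+1) (@dyadic_cube R d n (ks i))))).

Definition cutout_type (dO : measure_display) (O : measurableType dO)
  (R : realType) (P : probability O R) (d : nat)
  (F : set (set 'rV[R]_d)) (tau zeta : R)
  (mu : nat -> O -> 'rV[R]_d -> R) (N0 : O -> nat) :=
  exists (C : R) (Om : set 'rV[R]_d) (Lam : nat -> O -> seq (set 'rV[R]_d)),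
    0 < C /\ F Om /\
    (forall n w L, L \in Lam n w -> F L) /\
    (forall n w x, mu n w x =
        two_pow (tau * n%:R) * (\1_(Om `\` \bigcup_(L in [set L | L \in Lam n w]) L) x)) /\
    {ae P, forall w, forall n, (N0 w <= n)%N -> (size (Lam n w))%:R <= C * two_pow (zeta * n%:R)}.

Definition cell_type (dO : measure_display) (O : measurableType dO)
  (R : realType) (P : probability O R) (d : nat)
  (F : set (set 'rV[R]_d)) (tau zeta : R)
  (mu : nat -> O -> 'rV[R]_d -> R) (N0 : O -> nat) :=
  exists (C : R) (cF : nat -> O -> seq (R * set 'rV[R]_d)),
    0 < C /\
    (forall n w p, p \in cF n w -> F p.2) /\
    (forall n w x, mu n w x = \sum_(p <- cF n w) p.1 * \1_(p.2) x) /\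
    {ae P, forall w, forall n p, p \in cF n w -> 0 <= p.1 <= C * two_pow (tau * n%:R)} /\
    {ae P, forall w, forall n, (N0 w <= n)%N -> (size (cF n w))%:R <= C * two_pow (zeta * n%:R)}.

(** [mu n w] is a nonnegative combination
    of indicators of sets [A], so the difference of its integrals against
    [eta_t] and [eta_u] is at most the total weight times the largest
    [nu]-measure of a symmetric difference of preimages [Pi_t^-1 A + Pi_u^-1 A].
    For cells these are controlled directly by the Hölder hypothesis and the
    total weight is at most [M_n * C 2^(tau n)]; for a cutout
    [A = Omega \ U Lambda_j] the symmetric difference is covered by those of
    [Omega] and of the [M_n] sets [Lambda_j], with the single weight [2^(tau n)].
    In both cases [M_n <= C 2^(zeta n)] for [n >= N0] gives the factor
    [2^((tau + zeta) n)]. *)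

From HB Require Import structures.
From mathcomp Require Import all_boot all_order all_algebra.
From mathcomp Require Import all_classical all_reals all_analysis.
From mathcomp Require Import measurable_realfun lra ring.
Set Implicit Arguments. Unset Strict Implicit. Unset Printing Implicit Defensive.
Import Order.TTheory GRing.Theory Num.Theory.
Import numFieldNormedType.Exports.
Local Open Scope classical_set_scope.
Local Open Scope ring_scope.

Lemma sumr_const_seq (R : pzSemiRingType) (I : Type) (s : seq I) (c : R) :
  \sum_(i <- s) c = (size s)%:R * c.
Proof. by rewrite big_const_seq count_predT iter_addr_0 mulr_natl. Qed.

Lemma measurable_preimage dX (X : measurableType dX) dY (Y : measurableType dY)
    (h : X -> Y) (A : set Y) :
  measurable_fun setT h -> measurable A -> measurable (h @^-1` A).
Proof. by move=> mh mA; rewrite -[X in measurable X]setTI; exact: mh. Qed.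

Lemma setYD_subset (T : Type) (A B A' B' : set T) :
  (A `\` B) `+` (A' `\` B') `<=` (A `+` A') `|` (B `+` B').
Proof.
by move=> x /=; have [Bx|nBx] := pselect (B x); have [B'x|nB'x] := pselect (B' x);
  tauto.
Qed.

Lemma setY_bigcup_subset (I T : Type) (D : set I) (F G : I -> set T) :
  (\bigcup_(i in D) F i) `+` (\bigcup_(i in D) G i) `<=`
  \bigcup_(i in D) (F i `+` G i).
Proof.
have half (F' G' : I -> set T) x : (\bigcup_(i in D) F' i) x ->
    ~ (\bigcup_(i in D) G' i) x -> exists2 i, D i & F' i x /\ ~ G' i x.
  by case=> i Di F'x nG'x; exists i => //; split => // G'x; apply: nG'x; exists i.
move=> x [[Fx nGx]|[Gx nFx]].
- by have [i Di ?] := half _ _ x Fx nGx; exists i => //; left.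
- by have [i Di ?] := half _ _ x Gx nFx; exists i => //; right.
Qed.

Section indic_sum.
Context (R : realType) dT (T : measurableType dT).
Implicit Types s : seq (R * set T).

Definition indic_sum s (x : T) : R := \sum_(p <- s) p.1 * \1_(p.2) x.

Lemma indic_sum_ge0 s x : (forall p, p \in s -> 0 <= p.1) -> 0 <= indic_sum s x.
Proof.
move=> s0; rewrite /indic_sum big_seq.
by apply: sumr_ge0 => p /s0 p0; rewrite mulr_ge0.
Qed.

Lemma measurable_indic_sum s :
  (forall p, p \in s -> measurable p.2) -> measurable_fun setT (indic_sum s).
Proof.
move=> ms; have -> : indic_sum s =
    (fun x => \sum_(p <- s) if p \in s then p.1 * \1_(p.2) x else 0).
  by apply/funext => x; rewrite /indic_sum big_seq big_mkcond.
apply: measurable_sum => p /=.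
case: (boolP (p \in s)) => [/ms mp|_]; last exact: measurable_cst.
by apply: measurable_funM => //; exact: measurable_indic.
Qed.

Lemma integral_indic_sum (mu : {measure set T -> \bar R}) s :
  (forall p, p \in s -> 0 <= p.1 /\ measurable p.2) ->
  (\int[mu]_x (indic_sum s x)%:E = \sum_(p <- s) p.1%:E * mu p.2)%E.
Proof.
(* Guarding each summand by [p \in s] makes it measurable and nonnegative for
   every [p], as [ge0_integral_sum] requires. *)
move=> hs; under eq_integral do rewrite /indic_sum -sumEFin big_seq big_mkcond.
rewrite ge0_integral_sum //; first last.
- by move=> p x _; case: ifPn => [/hs[p0 _]|_] //; rewrite lee_fin mulr_ge0.
- move=> p; case: (boolP (p \in s)) => [/hs[_ mp]|_]; last exact: measurable_cst.
  by apply/measurable_EFinP/measurable_funM => //; exact: measurable_indic.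
rewrite [RHS]big_seq [RHS]big_mkcond; apply: eq_bigr => p _.
case: (boolP (p \in s)) => [/hs[p0 mp]|_]; last exact: integral0.
under eq_integral do rewrite EFinM.
rewrite ge0_integralZl ?integral_indic ?setIT //.
by apply/measurable_EFinP; exact: measurable_indic.
Qed.

End indic_sum.

Lemma integral_pushforward_indic_sum (R : realType) dX (X : measurableType dX)
    dY (Y : measurableType dY) (mu : {measure set X -> \bar R}) (phi : X -> Y)
    (s : seq (R * set Y)) :
  measurable_fun setT phi ->
  (forall p, p \in s -> 0 <= p.1 /\ measurable p.2) ->
  (\int[pushforward mu phi]_y (indic_sum s y)%:E
   = \sum_(p <- s) p.1%:E * mu (phi @^-1` p.2))%E.
Proof.
move=> mphi hs; rewrite ge0_integral_pushforward //; first last.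
- by move=> y _; rewrite lee_fin indic_sum_ge0 // => p /hs[].
- by apply/measurable_EFinP/measurable_indic_sum => p /hs[].
have -> : (fun y => (indic_sum s y)%:E) \o phi =
    (fun x => (indic_sum [seq (p.1, phi @^-1` p.2) | p <- s] x)%:E).
  by apply/funext => x; rewrite /indic_sum /= big_map.
rewrite preimage_setT integral_indic_sum ?big_map // => _ /mapP[p /hs[p0 mp] ->].
by split => //; exact: measurable_preimage.
Qed.

Section measure_setY.
Context (R : realType) dT (T : measurableType dT) (mu : {measure set T -> \bar R}).

Lemma measure_le_setY (A B : set T) : measurable A -> measurable B ->
  (mu A <= mu B + mu (A `+` B))%E.
Proof.
move=> mA mB.
have mAB : measurable (A `+` B) by apply: measurableU; exact: measurableD.
apply: le_trans (measureU2 _ mB mAB); apply: le_measure; rewrite ?inE //.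
  exact: measurableU.
by move=> x Ax; have [Bx|nBx] := pselect (B x); [left|right; left].
Qed.

Lemma measure_dist_le_setY (A B : set T) (D : R) :
  measurable A -> measurable B -> (mu A < +oo)%E -> (mu B < +oo)%E ->
  (mu (A `+` B) <= D%:E)%E -> `|fine (mu A) - fine (mu B)| <= D.
Proof.
move=> mA mB Afin Bfin ABD.
have finE X : (mu X < +oo)%E -> mu X = (fine (mu X))%:E.
  by move=> Xfin; rewrite fineK // ge0_fin_numE.
have AB := le_trans (measure_le_setY mA mB) (leeD2l _ ABD).
rewrite setYC in ABD; have BA := le_trans (measure_le_setY mB mA) (leeD2l _ ABD).
rewrite (finE A) // (finE B) // -!EFinD !lee_fin in AB BA.
by rewrite ler_norml; apply/andP; split; lra.
Qed.

Lemma measure_bigsetU_le (I : eqType) (s : seq I) (G : I -> set T) :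
  (forall i, i \in s -> measurable (G i)) ->
  (mu (\big[setU/set0]_(i <- s) G i) <= \sum_(i <- s) mu (G i))%E.
Proof.
elim: s => [|i s IH] mG; first by rewrite !big_nil measure0.
have mG' j : j \in s -> measurable (G j).
  by move=> js; apply: mG; rewrite inE js orbT.
rewrite !big_cons; apply: le_trans (measureU2 _ _ _) _.
- by apply: mG; rewrite inE eqxx.
- by rewrite big_seq; apply: bigsetU_measurable.
by apply: leeD2l; exact: IH.
Qed.

End measure_setY.

Section pushforward_dist.
Context (R : realType) dX (X : measurableType dX) dY (Y : measurableType dY).
Variables (mu : {measure set X -> \bar R}) (f g : X -> Y).
Hypotheses (mf : measurable_fun setT f) (mg : measurable_fun setT g).

Lemma pushforward_indic_sum_dist (s : seq (R * set Y)) (D : R) :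
  (forall p, p \in s -> [/\ 0 <= p.1, measurable p.2,
     (mu (f @^-1` p.2) < +oo)%E, (mu (g @^-1` p.2) < +oo)%E &
     (mu (f @^-1` p.2 `+` g @^-1` p.2) <= D%:E)%E]) ->
  (`| \int[pushforward mu f]_y (indic_sum s y)%:E
    - \int[pushforward mu g]_y (indic_sum s y)%:E |
   <= ((\sum_(p <- s) p.1) * D)%:E)%E.
Proof.
move=> hs; have hs0 p : p \in s -> 0 <= p.1 /\ measurable p.2 by move=> /hs[].
rewrite !integral_pushforward_indic_sum //.
have finE h : (forall p, p \in s -> (mu (h @^-1` p.2) < +oo)%E) ->
    (\sum_(p <- s) p.1%:E * mu (h @^-1` p.2))%E
    = (\sum_(p <- s) p.1 * fine (mu (h @^-1` p.2)))%:E.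
  move=> hfin; rewrite -sumEFin big_seq [RHS]big_seq; apply: eq_bigr => p ps.
  by rewrite EFinM fineK // ge0_fin_numE // hfin.
rewrite !finE; [|by move=> p /hs[]..].
rewrite -EFinB abse_EFin lee_fin -sumrB mulr_suml.
apply: le_trans (ler_norm_sum _ _ _) _.
rewrite big_seq [leRHS]big_seq; apply: ler_sum => p /hs[p0 mp ffin gfin YD].
rewrite -mulrBr normrM ger0_norm //; apply: ler_wpM2l => //.
by apply: measure_dist_le_setY => //; exact: measurable_preimage.
Qed.

Lemma measure_preimage_setY_cutout (Om : set Y) (s : seq (set Y)) (K : R) :
  measurable Om -> (forall L, L \in s -> measurable L) ->
  (forall L, L = Om \/ L \in s -> (mu (f @^-1` L `+` g @^-1` L) <= K%:E)%E) ->
  (mu (f @^-1` (Om `\` \bigcup_(L in [set` s]) L)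
       `+` g @^-1` (Om `\` \bigcup_(L in [set` s]) L))
     <= ((1 + (size s)%:R) * K)%:E)%E.
Proof.
move=> mOm ms YK.
have mY L : measurable L -> measurable (f @^-1` L `+` g @^-1` L).
  by move=> mL; apply: measurableU; apply: measurableD; exact: measurable_preimage.
have mU : measurable (\big[setU/set0]_(L <- s) (f @^-1` L `+` g @^-1` L)).
  by rewrite big_seq; apply: bigsetU_measurable => L /ms; exact: mY.
apply: (@le_trans _ _ (mu ((f @^-1` Om `+` g @^-1` Om) `|`
          \big[setU/set0]_(L <- s) (f @^-1` L `+` g @^-1` L)))).
  apply: le_measure; rewrite ?inE.
  - apply: mY; apply: measurableD => //.
    by rewrite bigcup_seq big_seq; apply: bigsetU_measurable => L /ms.
  - by apply: measurableU => //; exact: mY.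
  rewrite -bigcup_seq => x Yx.
  have [|] := @setYD_subset _ (f @^-1` Om) (f @^-1` \bigcup_(L in [set` s]) L)
                        (g @^-1` Om) (g @^-1` \bigcup_(L in [set` s]) L) x Yx.
    by left.
  by rewrite !preimage_bigcup => Ux; right; exact: setY_bigcup_subset.
apply: le_trans; first exact: (measureU2 mu (mY _ mOm) mU).
rewrite mulrDl mul1r EFinD; apply: leeD; first by apply: YK; left.
apply: le_trans; first by apply: measure_bigsetU_le => L /ms /mY.
rewrite -sumr_const_seq -sumEFin big_seq [leRHS]big_seq.
by apply: lee_sum => L Ls; apply: YK; right.
Qed.

End pushforward_dist.

Lemma two_powD (R : realType) (a b : R) : two_pow (a + b) = two_pow a * two_pow b.
Proof. by rewrite /two_pow powRD // pnatr_eq0 implybT. Qed.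

Lemma two_pow_ge1 (R : realType) (a : R) : 0 <= a -> 1 <= two_pow a.
Proof.
by move=> a0; apply: le_trans (ler_powR (ler1n R 2) a0); rewrite powRr0.
Qed.

Section pushforward_holder.
Context (R : realType) (d : nat) (dO : measure_display) (O : measurableType dO)
  (P : probability O R) (F : set (set 'rV[R]_d)) (tau zeta : R)
  (mu : nat -> O -> 'rV[R]_d -> R) (N0 : O -> nat)
  (dM : measure_display) (M : measurableType dM) (nu : {measure set M -> \bar R})
  (Gam : metricType R) (Pi : Gam -> M -> Rd R d) (gamma0 C : R).
Hypotheses (mF : forall L, F L -> measurable (L : set (Rd R d)))
  (zeta0 : 0 < zeta) (C0 : 0 < C)
  (mPi : forall t, measurable_fun [set: M] (Pi t))
  (Pi_fin : forall t L, F L -> (nu (Pi t @^-1` L) < +oo)%E)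
  (Pi_holder : forall L t u, F L ->
     (nu (Pi t @^-1` L `+` Pi u @^-1` L) <= (C * mdist t u `^ gamma0)%:E)%E).

Let holder_bound (C' : R) := {ae P, forall w, forall (t u : Gam) (n : nat),
  t <> u -> (N0 w <= n)%N ->
  (`| \int[pushforward nu (Pi t)]_x (mu n w x)%:E
      - \int[pushforward nu (Pi u)]_x (mu n w x)%:E |
   <= (C' * two_pow ((tau + zeta) * n%:R) * mdist t u `^ gamma0)%:E)%E}.

Let holder_ge0 (t u : Gam) : 0 <= C * mdist t u `^ gamma0.
Proof. by rewrite mulr_ge0 ?powR_ge0 ?ltW. Qed.

Lemma cutout_type_pushforward_holder :
  cutout_type P F tau zeta mu N0 -> exists C', holder_bound C'.
Proof.
case=> Cc [Om [Lam [Cc0 [FOm [FLam [mu_def size_ae]]]]]].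
exists ((1 + Cc) * C); apply: filterS size_ae => w size_le t u n _ Nn.
pose A : set (Rd R d) := Om `\` \bigcup_(L in [set` Lam n w]) L.
set c := two_pow (tau * n%:R).
have -> : mu n w = indic_sum [:: (c, A)].
  by apply/funext => x; rewrite mu_def /indic_sum big_seq1.
have mA : measurable A.
  apply: measurableD; first exact: mF.
  by rewrite bigcup_seq big_seq; apply: bigsetU_measurable => L /FLam /mF.
have finA t' : (nu (Pi t' @^-1` A) < +oo)%E.
  apply: le_lt_trans (Pi_fin t' FOm); apply: le_measure; rewrite ?inE.
  - exact: measurable_preimage.
  - by apply: measurable_preimage => //; exact: mF.
  - by move=> x [].
apply: le_trans (pushforward_indic_sum_dist (mPi t) (mPi u)
  (D := (1 + (size (Lam n w))%:R) * (C * mdist t u `^ gamma0)) _) _.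
  move=> p; rewrite inE => /eqP -> /=; split => //; first exact: powR_ge0.
  apply: measure_preimage_setY_cutout => //; first exact: mF.
  - by move=> L /FLam /mF.
  - by move=> L [->|/FLam FL]; exact: Pi_holder.
rewrite big_seq1 lee_fin (mulrDl tau zeta) two_powD -/c.
have sz : 1 + (size (Lam n w))%:R <= (1 + Cc) * two_pow (zeta * n%:R).
  have := two_pow_ge1 (mulr_ge0 (ltW zeta0) (ler0n R n)); have := size_le n Nn; nra.
rewrite [leRHS](_ : _ = c * ((1 + Cc) * two_pow (zeta * n%:R) *
                                (C * mdist t u `^ gamma0))); last by ring.
by apply: ler_wpM2l; [exact: powR_ge0|exact: ler_wpM2r].
Qed.

Lemma cell_type_pushforward_holder :
  cell_type P F tau zeta mu N0 -> exists C', holder_bound C'.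
Proof.
case=> Cl [cF [Cl0 [FcF [mu_def [wt_ae size_ae]]]]].
exists (Cl * Cl * C); apply: filterS2 wt_ae size_ae => w wt_le size_le t u n _ Nn.
have -> : mu n w = indic_sum (cF n w : seq (R * set (Rd R d))).
  by apply/funext => x; exact: mu_def.
apply: le_trans (pushforward_indic_sum_dist (mPi t) (mPi u)
  (D := C * mdist t u `^ gamma0) _) _.
  move=> p ps; have Fp := FcF n w p ps; have /andP[p0 _] := wt_le n p ps.
  by split => //; [exact: mF|exact: Pi_fin|exact: Pi_fin|exact: Pi_holder].
rewrite lee_fin (mulrDl tau zeta) two_powD.
have wt_sum : \sum_(p <- cF n w) p.1 <=
    Cl * two_pow (zeta * n%:R) * (Cl * two_pow (tau * n%:R)).
  apply: (@le_trans _ _ (\sum_(p <- cF n w) Cl * two_pow (tau * n%:R))).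
    by rewrite big_seq [leRHS]big_seq; apply: ler_sum => p /(wt_le n)/andP[].
  rewrite sumr_const_seq; apply: ler_wpM2r (size_le n Nn).
  by rewrite mulr_ge0 ?powR_ge0 ?ltW.
rewrite [leRHS](_ : _ = Cl * two_pow (zeta * n%:R) * (Cl * two_pow (tau * n%:R)) *
                        (C * mdist t u `^ gamma0)); last by ring.
by apply: ler_wpM2r; [exact: holder_ge0|exact: wt_sum].
Qed.

End pushforward_holder.

Theorem proposition6p1 (R : realType) (d : nat)
  (dO : measure_display) (O : measurableType dO) (P : probability O R)
  (Rad : R) (F : set (set 'rV[R]_d)) (tau zeta : R)
  (mu : nat -> O -> 'rV[R]_d -> R) (N0 : O -> nat)
  (dM : measure_display) (M : measurableType dM) (nu : {measure set M -> \bar R})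
  (Gam : metricType R) (Pi : Gam -> M -> Rd R d) (gamma0 C : R) :
  (forall L, F L -> measurable (L : set (Rd R d)) /\ L `<=` ball (0 : 'rV[R]_d) Rad) ->
  0 < tau -> 0 < zeta ->
  SI_martingale P mu ->
  (cutout_type P F tau zeta mu N0 \/ cell_type P F tau zeta mu N0) ->
  (forall t, measurable_fun [set: M] (Pi t)) ->
  (forall t L, F L -> (nu (Pi t @^-1` L) < +oo)%E) ->
  0 < gamma0 -> 0 < C ->
  (forall L t u, F L ->
     (nu ((Pi t @^-1` L `\` Pi u @^-1` L) `|` (Pi u @^-1` L `\` Pi t @^-1` L))
       <= (C * mdist t u `^ gamma0)%:E)%E) ->
  exists C' : R,
    {ae P, forall w, forall (t u : Gam) (n : nat), t <> u -> (N0 w <= n)%N ->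
      (`| \int[pushforward nu (Pi t)]_x (mu n w x)%:E
          - \int[pushforward nu (Pi u)]_x (mu n w x)%:E |
       <= (C' * two_pow ((tau + zeta) * n%:R) * mdist t u `^ gamma0)%:E)%E}.
Proof.
move=> hF _ zeta0 _ mu_type mPi Pi_fin _ C0 Pi_holder.
have mF L : F L -> measurable (L : set (Rd R d)) by case/hF.
case: mu_type => [cutout|cell].
- exact: (cutout_type_pushforward_holder mF zeta0 C0 mPi Pi_fin Pi_holder cutout).
- exact: (cell_type_pushforward_holder mF C0 mPi Pi_fin Pi_holder cell).
Qed.
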